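(* Let $G=(V,E,L)$ be a hypergraph with loops, and let $G_1,G_2$ be section hypergraphs of $G$ such that $G_1\cup G_2=G$, $G_1\cap G_2$ is a complete hypergraph, and $G_1\cap G_2$ has no plus loops. Then $\mathrm{PP}(G)$ is decomposable into $\mathrm{PP}(G_1)$ and $\mathrm{PP}(G_2)$, i.e., $$\mathrm{PP}(G)=\{z\in\mathbb{R}^{V\cup E\cup L}: z|_{G_1}\in\mathrm{PP}(G_1),\ z|_{G_2}\in\mathrm{PP}(G_2)\},$$ where $z|_{G_k}$ denotes the restriction of $z$ to the coordinates indexed by the nodes, edges and loops of $G_k$.
   Context: A hypergraph with loops is $G=(V,E,L)$: $V$ a finite node set, $E$ a set of subsets of $V$ of cardinality at least two, $L$ a set of loops $\{i,i\}$, $i\in V$, partitioned as $L=L^-\cup L^+$ (minus/plus loops). It is complete if $E$ consists of all subsets of $V$ of cardinality at least two. For $V'\subseteq V$, the section hypergraph induced by $V'$ is $(V',E',L')$ with $E'=\{e\in E: e\subseteq V'\}$, $L'=\{\{i,i\}\in L: i\in V'\}$, each loop keeping its sign. For $G_k=(V_k,E_k,L_k)$: $G_1\cap G_2:=(V_1\cap V_2,E_1\cap E_2,L_1\cap L_2)$ and $G_1\cup G_2:=(V_1\cup V_2,E_1\cup E_2,L_1\cup L_2)$. $\mathrm{PP}(G):=\mathrm{conv}\{z\in\mathbb{R}^{V\cup E\cup L}: z_{ii}\ge z_i^2\ \forall\{i,i\}\in L^+,\ z_{ii}\le z_i^2\ \forall \{i,i\}\in L^-,\ z_e=\prod_{i\in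 e}z_i\ \forall e\in E,\ z_i\in[0,1]\ \forall i\in V\}$. *)

From HB Require Import structures.
From mathcomp Require Import all_boot all_order all_algebra.
From mathcomp Require Import reals.
Set Implicit Arguments. Unset Strict Implicit. Unset Printing Implicit Defensive.
Import Order.TTheory GRing.Theory Num.Theory.
Local Open Scope ring_scope.

(* A hypergraph with loops over an ambient finite type T of potential nodes.
   Loops {i,i} are identified with the node i; hlminus / hlplus are the
   nodes carrying a minus / plus loop. *)
Record hgraph (T : finType) := HGraph {
  hnodes  : {set T};
  hedges  : {set {set T}};
  hlminus : {set T};
  hlplus  : {set T} }.

Definition hg_wf (T : finType) (G : hgraph T) : Prop :=
  [/\ forall e, e \in hedges G -> e \subset hnodes G /\ (1 < #|e|)%N,
      hlminus G \subset hnodes G,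
      hlplus G \subset hnodes G &
      [disjoint hlminus G & hlplus G]].

Definition section (T : finType) (G : hgraph T) (V' : {set T}) : hgraph T :=
  HGraph V' [set e in hedges G | e \subset V']
         (hlminus G :&: V') (hlplus G :&: V').

Definition hg_inter (T : finType) (G1 G2 : hgraph T) : hgraph T :=
  HGraph (hnodes G1 :&: hnodes G2) (hedges G1 :&: hedges G2)
         (hlminus G1 :&: hlminus G2) (hlplus G1 :&: hlplus G2).

Definition hg_union (T : finType) (G1 G2 : hgraph T) : hgraph T :=
  HGraph (hnodes G1 :|: hnodes G2) (hedges G1 :|: hedges G2)
         (hlminus G1 :|: hlminus G2) (hlplus G1 :|: hlplus G2).

Definition complete (T : finType) (G : hgraph T) : Prop :=
  hedges G = [set e : {set T} | (e \subset hnodes G) && (1 < #|e|)%N].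

Definition idx (T : finType) : finType := ((T + {set T}) + T)%type.
Definition cnode (T : finType) (i : T) : idx T := inl (inl i).
Definition cedge (T : finType) (e : {set T}) : idx T := inl (inr e).
Definition cloop (T : finType) (i : T) : idx T := inr i.

Definition coord (T : finType) (G : hgraph T) (k : idx T) : bool :=
  match k with
  | inl (inl i) => i \in hnodes G
  | inl (inr e) => e \in hedges G
  | inr i => (i \in hlminus G) || (i \in hlplus G)
  end.

(* A vector of R^{V ∪ E ∪ L} is encoded as a function idx T -> R that
   vanishes outside the coordinates of G. *)
Definition supported (R : realType) (T : finType) (G : hgraph T)
  (z : idx T -> R) : Prop := forall k, ~~ coord G k -> z k = 0.

Definition restr (R : realType) (T : finType) (H : hgraph T)
  (z : idx T -> R) : idx T -> R := fun k => if coord H k then z k else 0.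

Definition pp_feasible (R : realType) (T : finType) (G : hgraph T)
  (z : idx T -> R) : Prop :=
  [/\ supported G z,
      forall i, i \in hlplus G -> z (cloop i) >= z (cnode i) ^+ 2,
      forall i, i \in hlminus G -> z (cloop i) <= z (cnode i) ^+ 2,
      forall e, e \in hedges G -> z (cedge e) = \prod_(i in e) z (cnode i) &
      forall i, i \in hnodes G -> 0 <= z (cnode i) <= 1].

Definition conv (R : realType) (T : finType) (S : (idx T -> R) -> Prop)
  (z : idx T -> R) : Prop :=
  exists (n : nat) (lam : 'I_n -> R) (p : 'I_n -> idx T -> R),
    [/\ forall j, 0 <= lam j,
        \sum_(j < n) lam j = 1,
        forall j, S (p j) &
        forall k, z k = \sum_(j < n) lam j * p j k].

Definition PP (R : realType) (T : finType) (G : hgraph T) : (idx T -> R) -> Prop :=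
  conv (pp_feasible G).

From Pilot Require Import Defs.
From HB Require Import structures.
From mathcomp Require Import all_boot all_order all_algebra.
From mathcomp Require Import reals.
From mathcomp Require Import ring lra.
(* Puts [Defs.coord] back in front of the [coord] of mathcomp's vector.v. *)
Import Pilot.Defs.
Set Implicit Arguments. Unset Strict Implicit. Unset Printing Implicit Defensive.
Import Order.TTheory GRing.Theory Num.Theory.
Local Open Scope ring_scope.

(* Since no node of W = V1 :&: V2 carries a plus loop, a feasible point of a
   section can be rounded at random on W (node i becomes 1 with probability
   z_i, edges take the product of the new node values, minus loops move with
   their node) without leaving the feasible set and without changing the mean.
   So a point of PP(G1) or PP(G2) is the mean of a finite distribution over
   feasible points that are 0/1 on W.  As G1 :&: G2 is complete, every
   monomial in the W-coordinates is a coordinate z_S shared by G1 and G2, so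
   both distributions induce the same law of the 0/1 pattern on W.  Coupling
   them along this common law and gluing each coupled pair, whose members agree
   on W, writes z as a mean of feasible points of G. *)

Section Bernoulli.
Variables (R : comPzRingType) (T : finType).

Definition bernoulli (y : T -> R) (b : {set T}) : R :=
  \prod_i (if i \in b then y i else 1 - y i).

Lemma sum_bernoulli_prod (y A B : T -> R) :
  \sum_b bernoulli y b * \prod_i (if i \in b then A i else B i)
  = \prod_i (y i * A i + (1 - y i) * B i).
Proof.
rewrite bigA_distr; apply: eq_bigr => b _.
by rewrite -big_split; apply: eq_bigr => i _; case: (i \in b).
Qed.

Lemma sum_bernoulli (y : T -> R) : \sum_b bernoulli y b = 1.
Proof.
transitivity (\sum_b bernoulli y b * \prod_i (if i \in b then 1 else 1)).
  by apply: eq_bigr => b _; rewrite big1 ?mulr1 // => i _; case: ifP.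
by rewrite sum_bernoulli_prod big1 // => i _; rewrite !mulr1 subrKC.
Qed.

Lemma sum_bernoulli_mem (y : T -> R) i a c :
  \sum_b bernoulli y b * (if i \in b then a else c) = y i * a + (1 - y i) * c.
Proof.
pose A j := if j == i then a else 1; pose C j := if j == i then c else 1.
transitivity (\sum_b bernoulli y b * \prod_j (if j \in b then A j else C j)).
  apply: eq_bigr => b _; rewrite (bigD1 i) //= /A /C eqxx big1 ?mulr1 // => j /negbTE ->.
  by case: (j \in b).
rewrite sum_bernoulli_prod (bigD1 i) //= /A /C eqxx big1 ?mulr1 // => j /negbTE ->.
by rewrite !mulr1 subrKC.
Qed.

Lemma prod_affine_expand (a c t : T -> R) :
  \prod_i (a i + c i * t i)
  = \sum_(S : {set T}) (\prod_i (if i \in S then c i else a i)) * \prod_(i in S) t i.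
Proof.
under eq_bigr do rewrite addrC.
rewrite bigA_distr; apply: eq_bigr => S _.
rewrite [X in _ = _ * X]big_mkcond -big_split.
by apply: eq_bigr => i _ /=; case: (i \in S); rewrite ?mulr1.
Qed.

End Bernoulli.

Lemma bernoulli_ge0 (R : numDomainType) (T : finType) (y : T -> R) b :
  (forall i, 0 <= y i <= 1) -> 0 <= bernoulli y b.
Proof.
move=> y01; apply: prodr_ge0 => i _; have /andP[y0 y1] := y01 i.
by case: (i \in b); rewrite ?subr_ge0.
Qed.

Section Patterns.
Variables (R : comNzRingType) (T : finType).
Implicit Types (W B : {set T}) (t : T -> R).

Definition zero_one_on W t := forall i, i \in W -> t i = 0 \/ t i = 1.

Definition pattern W t : {set T} := [set i in W | t i == 1].

Definition pattern_slope W B i : R := if i \in W then (if i \in B then 1 else -1) else 0.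

(* A product of affine functions of the [t i], so that [prod_affine_expand]
   turns its mean into a combination of moments. *)
Definition pattern_indicator W B t : R :=
  \prod_i ((i \notin B)%:R + pattern_slope W B i * t i).

Lemma pattern_indicator_zero_one W B t :
  zero_one_on W t -> pattern_indicator W B t = (pattern W t == B)%:R.
Proof.
have n01 : (0 == 1 :> R) = false by rewrite eq_sym oner_eq0.
move=> t01; case: eqP => [<- | neq].
  rewrite /pattern_indicator big1 // => i _; rewrite /pattern_slope !inE.
  case: (boolP (i \in W)) => iW /=; last by rewrite mul0r addr0.
  by case: (t01 i iW) => ->; rewrite ?n01 ?eqxx /= ?mulr0 ?mulr1 ?add0r ?addr0.
have [i iB] : exists i, (i \in pattern W t) != (i \in B).
  apply/existsP/contraT => /existsPn eqWB; exfalso; apply/neq/setP => i.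
  exact/eqP/negbNE/eqWB.
rewrite /pattern_indicator (bigD1 i) //= [X in X * _](_ : _ = 0) ?mul0r //.
move: iB; rewrite /pattern_slope !inE; case: (boolP (i \in W)) => iW /=.
  by case: (t01 i iW) => ->; case: (i \in B); rewrite ?n01 ?eqxx //= => _;
     rewrite ?mulr0 ?mulr1 ?addr0 ?mulN1r ?subrr.
by case: (i \in B); rewrite //= mul0r addr0.
Qed.

Lemma eq_pattern_zero_one W t t' : zero_one_on W t -> zero_one_on W t' ->
  pattern W t = pattern W t' -> {in W, t =1 t'}.
Proof.
move=> t01 t'01 /setP eqp i iW; have := eqp i; rewrite !inE iW /=.
by case: (t01 i iW) => ->; case: (t'01 i iW) => -> //; rewrite eqxx eq_sym oner_eq0.
Qed.

End Patterns.
Arguments pattern_slope {R T} W B i.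

Section Coupling.
Variables (R : numFieldType) (I J : finType) (K : eqType).
Variables (lam : I -> R) (mu : J -> R) (f : I -> K) (g : J -> K).
Hypotheses (lam_ge0 : forall i, 0 <= lam i) (mu_ge0 : forall j, 0 <= mu j).
Hypothesis same_law :
  forall r, \sum_(i | f i == r) lam i = \sum_(j | g j == r) mu j.

Let law r := \sum_(j | g j == r) mu j.

Definition coupling (x : I * J) : R :=
  if f x.1 == g x.2 then lam x.1 * mu x.2 / law (f x.1) else 0.

Lemma coupling_ge0 x : 0 <= coupling x.
Proof.
rewrite /coupling; case: ifP => // _.
by rewrite divr_ge0 ?mulr_ge0 ?sumr_ge0.
Qed.

Lemma coupling_sum_fst i : \sum_j coupling (i, j) = lam i.
Proof.
rewrite /coupling /= -big_mkcond -mulr_suml -mulr_sumr.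
under eq_bigl do rewrite eq_sym.
have [law0 | /mulfK //] := eqVneq (law (f i)) 0.
rewrite law0 invr0 mulr0; move: law0; rewrite /law -same_law.
by move/psumr_eq0P => ->.
Qed.

Lemma coupling_sum_snd j : \sum_i coupling (i, j) = mu j.
Proof.
rewrite /coupling /= -big_mkcond.
under eq_bigr => i /eqP -> do rewrite mulrAC.
rewrite -mulr_suml -mulr_suml same_law.
have [law0 | law_neq0] := eqVneq (law (g j)) 0.
  by rewrite [X in X / _]law0 mul0r mul0r; move/psumr_eq0P: law0 => ->.
by rewrite -/(law (g j)) divff ?mul1r.
Qed.

Lemma sum_coupling_fst (F : I -> R) :
  \sum_x coupling x * F x.1 = \sum_i lam i * F i.
Proof.
rewrite -(pair_bigA _ (fun i j => coupling (i, j) * F i)) /=.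
by apply: eq_bigr => i _; rewrite -mulr_suml coupling_sum_fst.
Qed.

Lemma sum_coupling_snd (F : J -> R) :
  \sum_x coupling x * F x.2 = \sum_j mu j * F j.
Proof.
rewrite -(pair_bigA _ (fun i j => coupling (i, j) * F j)) exchange_big /=.
by apply: eq_bigr => j _; rewrite -mulr_suml coupling_sum_snd.
Qed.

Lemma sum_coupling : \sum_x coupling x = \sum_i lam i.
Proof.
have := sum_coupling_fst (fun _ => 1).
by under eq_bigr do rewrite mulr1; under [in RHS]eq_bigr do rewrite mulr1.
Qed.

End Coupling.

Section Hypergraphs.
Variables (R : realType) (T : finType).
Local Notation pt := (idx T -> R).
Implicit Types (p q z : pt) (G H : hgraph T) (S : {set T}).

Definition conv_fin (I : finType) (P : pt -> Prop) (z : pt) : Prop :=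
  exists (lam : I -> R) (p : I -> pt),
    [/\ forall j, 0 <= lam j, \sum_j lam j = 1, forall j, P (p j) &
        forall k, z k = \sum_j lam j * p j k].

Lemma convE P z : conv P z <-> exists I : finType, conv_fin I P z.
Proof.
split=> [[n [lam [p comb]]] | [I [lam [p [lam_ge0 lam_sum1 Pp z_comb]]]]].
  by exists 'I_n, lam, p.
have e := onW_bij predT (@enum_val_bij I).
exists #|I|, (lam \o enum_val), (p \o enum_val); split=> //=.
- by rewrite -lam_sum1 (reindex _ e).
- by move=> k; rewrite z_comb (reindex _ e).
Qed.

Lemma conv_restr (H : hgraph T) (P P' : pt -> Prop) z :
  (forall q, P q -> P' (restr H q)) -> conv P z -> conv P' (restr H z).
Proof.
move=> PP' [n [lam [p [lam_ge0 lam_sum1 Pp z_comb]]]].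
exists n, lam, (restr H \o p); split=> // [j | k]; first exact/PP'/Pp.
rewrite /restr /=; case: ifP => _; first exact: z_comb.
by rewrite big1 // => j _; rewrite mulr0.
Qed.

Lemma conv_supported (G : hgraph T) (P : pt -> Prop) z :
  (forall q, P q -> supported G q) -> conv P z -> supported G z.
Proof.
move=> Psupp [n [lam [p [_ _ Pp z_comb]]]] k kG.
by rewrite z_comb big1 // => j _; rewrite (Psupp _ (Pp j)) ?mulr0.
Qed.

Lemma coord_union (G1 G2 : hgraph T) k :
  coord (hg_union G1 G2) k = coord G1 k || coord G2 k.
Proof.
case: k => [[i|e]|i]; rewrite /= !inE //.
by case: (i \in hlminus G1); case: (i \in hlminus G2); case: (i \in hlplus G1).
Qed.

Lemma coord_section (G : hgraph T) (V : {set T}) k :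
  V \subset hnodes G -> coord (section G V) k -> coord G k.
Proof.
move=> VG; case: k => [[i|e]|i]; rewrite /= ?inE; first exact: (subsetP VG).
  by case/andP.
by case/orP => /andP[-> _]; rewrite ?orbT.
Qed.

Lemma pp_feasible0 (G : hgraph T) : hg_wf G -> pp_feasible G (fun _ => 0 : R).
Proof.
case=> edgesG _ _ _; split=> // [i _ | i _ | e eG | i _]; rewrite ?expr0n ?lexx ?ler01 //.
have [_ /ltnW/card_gt0P [i ie]] := edgesG e eG.
by rewrite (bigD1 i) //= mul0r.
Qed.

Lemma section_feasible (G : hgraph T) (V : {set T}) p :
  V \subset hnodes G -> pp_feasible G p ->
  pp_feasible (section G V) (restr (section G V) p).
Proof.
move=> VG [_ p_plus p_minus p_edge p_node]; split.
- by move=> k /negbTE kV; rewrite /restr kV.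
- by move=> i; rewrite /restr /= !inE => /andP[iP iV]; rewrite iV iP orbT; apply: p_plus.
- by move=> i; rewrite /restr /= !inE => /andP[iM iV]; rewrite iV iM; apply: p_minus.
- move=> e; rewrite /restr /= !inE => /andP[eG eV]; rewrite eG eV p_edge //.
  by apply: eq_bigr => i /(subsetP eV) ->.
- by move=> i iV; rewrite /restr /= iV; apply/p_node/(subsetP VG).
Qed.

Section Rounding.
Variables (H : hgraph T) (W : {set T}).
Hypotheses (W_nodes : W \subset hnodes H) (W_noplus : [disjoint W & hlplus H]).

(* Probability 1 off W, so that the weight [bernoulli (round_prob p)] only
   randomizes the nodes of W. *)
Definition round_prob p i : R := if i \in W then p (cnode i) else 1.

Definition round_node p (b : {set T}) i : R :=
  if i \in W then (if i \in b then 1 else 0) else p (cnode i).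

(* A minus loop at a node of W moves as much as the node does; since
   z_ii <= z_i^2 <= z_i it stays below the new 0/1 node value, its own square. *)
Definition round p (b : {set T}) (k : idx T) : R :=
  match k with
  | inl (inl i) => round_node p b i
  | inl (inr e) => if e \in hedges H then \prod_(i in e) round_node p b i else p k
  | inr i => if (i \in W) && (i \in hlminus H) then
               (if i \in b then p k - p (cnode i) + 1 else p k - p (cnode i))
             else p k
  end.

Lemma round_zero_one p b : zero_one_on W (round p b \o @cnode T).
Proof. by move=> i iW; rewrite /= /round_node iW; case: (i \in b); [right | left]. Qed.

Lemma round_prob_ge0 p b : pp_feasible H p -> 0 <= bernoulli (round_prob p) b.
Proof.
case=> _ _ _ _ p_node; apply: bernoulli_ge0 => i; rewrite /round_prob.
by case: ifP => [/(subsetP W_nodes)/p_node // | _]; rewrite lexx ler01.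
Qed.

Lemma round_feasible p b : pp_feasible H p -> pp_feasible H (round p b).
Proof.
move=> [p_supp p_plus p_minus p_edge p_node]; split.
- case=> [[i|e]|i] /= kH; rewrite /round_node.
  + by rewrite (contraNF (subsetP W_nodes i) kH) p_supp.
  + by rewrite (negbTE kH) p_supp.
  + by move: (kH); rewrite negb_or => /andP[/negbTE -> _]; rewrite andbF p_supp.
- move=> i iP /=; have /negbTE iW : i \notin W by rewrite (disjointFl W_noplus).
  by rewrite /round_node iW; apply: p_plus.
- move=> i iM /=; rewrite iM andbT /round_node; case: ifP => iW; last exact: p_minus.
  have /andP[pi0 pi1] := p_node i (subsetP W_nodes i iW); have := p_minus i iM.
  by case: (i \in b); rewrite ?expr1n ?expr0n /=; nra.
- by move=> e eH /=; rewrite eH.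
- move=> i iH /=; rewrite /round_node; case: ifP => _; last exact: p_node.
  by case: (i \in b); rewrite ?lexx ?ler01.
Qed.

Lemma mean_round p : pp_feasible H p ->
  forall k, \sum_b bernoulli (round_prob p) b * round p b k = p k.
Proof.
have mean_const c : \sum_b bernoulli (round_prob p) b * c = c.
  by rewrite -mulr_suml sum_bernoulli mul1r.
move=> [_ _ _ p_edge _] [[i|e]|i] /=.
- rewrite /round_node; case: (boolP (i \in W)) => iW /=; last exact: mean_const.
  by rewrite sum_bernoulli_mem /round_prob iW mulr1 mulr0 addr0.
- case: (boolP (e \in hedges H)) => eH; last exact: mean_const.
  pose node1 i : R := if i \in e then (if i \in W then 1 else p (cnode i)) else 1.
  pose node0 i : R := if i \in e then (if i \in W then 0 else p (cnode i)) else 1.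
  transitivity (\sum_b bernoulli (round_prob p) b *
                  \prod_i (if i \in b then node1 i else node0 i)).
    apply: eq_bigr => b _; congr (_ * _); rewrite big_mkcond; apply: eq_bigr => i _.
    rewrite /round_node /node1 /node0.
    by case: (i \in e); case: (i \in W); case: (i \in b).
  rewrite sum_bernoulli_prod -[inl (inr e)]/(cedge e) p_edge // [RHS]big_mkcond.
  apply: eq_bigr => i _; rewrite /round_prob /node1 /node0.
  by case: (i \in e); case: (i \in W); rewrite /=; ring.
- case: (boolP ((i \in W) && (i \in hlminus H))) => iWM; last exact: mean_const.
  rewrite sum_bernoulli_mem /round_prob; case/andP: iWM => -> _; ring.
Qed.

Lemma conv_fin_round (I : finType) z : conv_fin I (pp_feasible H) z ->
  conv_fin (I * {set T})%type
    (fun q => pp_feasible H q /\ zero_one_on W (q \o @cnode T)) z.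
Proof.
move=> [lam [p [lam_ge0 lam_sum1 p_feas z_comb]]].
exists (fun x => lam x.1 * bernoulli (round_prob (p x.1)) x.2),
       (fun x => round (p x.1) x.2).
split.
- by move=> [j b]; rewrite mulr_ge0 ?round_prob_ge0.
- rewrite -(pair_bigA _ (fun j b => lam j * bernoulli (round_prob (p j)) b)) /= -lam_sum1.
  by apply: eq_bigr => j _; rewrite -mulr_sumr sum_bernoulli mulr1.
- by move=> [j b]; split; [apply: round_feasible | apply: round_zero_one].
- move=> k; rewrite z_comb -(pair_bigA _ (fun j b =>
    lam j * bernoulli (round_prob (p j)) b * round (p j) b k)) /=.
  apply: eq_bigr => j _; rewrite -(mean_round (p_feas j) k) mulr_sumr.
  by apply: eq_bigr => b _; rewrite mulrA.
Qed.

End Rounding.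

Definition moment z (S : {set T}) : R :=
  if (1 < #|S|)%N then z (cedge S) else \prod_(i in S) z (cnode i).

Section Moments.
Variables (H : hgraph T) (W : {set T}).
Hypotheses (W_nodes : W \subset hnodes H)
  (W_complete : forall S, S \subset W -> (1 < #|S|)%N -> S \in hedges H).
Variables (I : finType) (lam : I -> R) (p : I -> pt) (z : pt).
Hypotheses (p_feas : forall j, pp_feasible H (p j)) (lam_sum1 : \sum_j lam j = 1)
  (z_comb : forall k, coord H k -> z k = \sum_j lam j * p j k).

Lemma mean_monomial S :
  S \subset W -> \sum_j lam j * \prod_(i in S) p j (cnode i) = moment z S.
Proof.
move=> SW; rewrite /moment; case: ifP => S_big.
  rewrite z_comb /= ?W_complete //; apply: eq_bigr => j _.
  by case: (p_feas j) => _ _ _ -> //; rewrite W_complete.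
have /orP[/eqP/cards0_eq -> | /cards1P [i Si]] : (#|S| == 0)%N || (#|S| == 1)%N.
  by case: #|S| S_big => [|[|]].
  by under [LHS]eq_bigr do rewrite big_set0 mulr1; rewrite big_set0.
move: SW; rewrite Si sub1set => iW; rewrite big_set1 z_comb /= ?(subsetP W_nodes) //.
by under eq_bigr do rewrite big_set1.
Qed.

Lemma pattern_law B : (forall j, zero_one_on W (p j \o @cnode T)) ->
  \sum_(j | pattern W (p j \o @cnode T) == B) lam j
  = \sum_(S : {set T})
      (\prod_i (if i \in S then pattern_slope W B i else (i \notin B)%:R)) * moment z S.
Proof.
move=> p01.
transitivity (\sum_j lam j * pattern_indicator W B (p j \o @cnode T)).
  rewrite big_mkcond; apply: eq_bigr => j _; rewrite pattern_indicator_zero_one //.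
  by case: (_ == B); rewrite ?mulr1 ?mulr0.
under eq_bigr do rewrite /pattern_indicator prod_affine_expand mulr_sumr.
rewrite exchange_big; apply: eq_bigr => S _.
have [SW | /subsetPn [i iS iW]] := boolP (S \subset W).
  by rewrite -mean_monomial // mulr_sumr; apply: eq_bigr => j _; rewrite mulrCA.
have coef0 : pattern_slope W B i = 0 by rewrite /pattern_slope (negbTE iW).
rewrite [X in _ = X * _](bigD1 i) //= iS coef0 !mul0r big1 // => j _.
by rewrite (bigD1 i) //= iS coef0 !mul0r mulr0.
Qed.

End Moments.

Definition glue H p q : pt := fun k => if coord H k then p k else q k.

Section Gluing.
Variables (G : hgraph T) (V1 V2 : {set T}).
Hypotheses (G_wf : hg_wf G) (V1_nodes : V1 \subset hnodes G)
  (V2_nodes : V2 \subset hnodes G)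
  (G_union : hg_union (section G V1) (section G V2) = G).
Local Notation G1 := (section G V1).
Local Notation G2 := (section G V2).

Lemma hnodes_union : hnodes G = V1 :|: V2.
Proof. by rewrite -{1}G_union. Qed.

Lemma glue_loop p q i : (i \in hlminus G) || (i \in hlplus G) ->
  glue G1 p q (cloop i) = if i \in V1 then p (cloop i) else q (cloop i).
Proof. by rewrite /glue /= !inE -andb_orl; case: (i \in V1) => [->|]; rewrite ?andbF. Qed.

Lemma glue_feasible p q : pp_feasible G1 p -> pp_feasible G2 q ->
  {in V1 :&: V2, p \o @cnode T =1 q \o @cnode T} -> pp_feasible G (glue G1 p q).
Proof.
case: G_wf => _ minusG plusG _.
move=> [_ p_plus p_minus p_edge p_node] [q_supp q_plus q_minus q_edge q_node] pq.
split.
- move=> k kG; rewrite /glue (contraNF (coord_section V1_nodes) kG).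
  exact/q_supp/(contra (coord_section V2_nodes)).
- move=> i iP; rewrite glue_loop ?iP ?orbT //= /glue /=.
  case: (boolP (i \in V1)) => iV1; first by apply: p_plus; rewrite !inE iP.
  have := subsetP plusG i iP; rewrite hnodes_union inE (negbTE iV1) => iV2.
  by apply: q_plus; rewrite !inE iP.
- move=> i iM; rewrite glue_loop ?iM //= /glue /=.
  case: (boolP (i \in V1)) => iV1; first by apply: p_minus; rewrite !inE iM.
  have := subsetP minusG i iM; rewrite hnodes_union inE (negbTE iV1) => iV2.
  by apply: q_minus; rewrite !inE iM.
- move=> e eG; rewrite /glue /= inE eG /=.
  case: (boolP (e \subset V1)) => eV1.
    by rewrite p_edge ?inE ?eG //; apply: eq_bigr => i /(subsetP eV1) ->.
  have : e \in hedges (hg_union G1 G2) by rewrite G_union.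
  rewrite !inE eG (negbTE eV1) /= => eV2.
  rewrite q_edge ?inE ?eG //; apply: eq_bigr => i ie; case: ifP => // iV1.
  by have /pq : i \in V1 :&: V2 by rewrite inE iV1 (subsetP eV2).
- move=> i iG; rewrite /glue /=; case: (boolP (i \in V1)) => iV1; first exact: p_node.
  by move: iG; rewrite hnodes_union inE (negbTE iV1); apply: q_node.
Qed.

Lemma inter_complete_edges : complete (hg_inter G1 G2) ->
  forall S, S \subset V1 :&: V2 -> (1 < #|S|)%N -> S \in hedges G.
Proof.
rewrite /complete => G12_edges S SW S_big.
have : S \in hedges (hg_inter G1 G2) by rewrite G12_edges inE SW S_big.
by rewrite !inE => /andP[/andP[]].
Qed.

Lemma inter_noplus : hlplus (hg_inter G1 G2) = set0 -> [disjoint V1 :&: V2 & hlplus G].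
Proof.
move=> G12_noplus; rewrite -setI_eq0 -G12_noplus; apply/eqP/setP => i.
by rewrite !inE; case: (i \in V1); case: (i \in V2); case: (i \in hlplus G).
Qed.

Section CoupledGluing.
Local Notation W := (V1 :&: V2).
Variables (I1 I2 : finType) (lam : I1 -> R) (p : I1 -> pt) (mu : I2 -> R) (q : I2 -> pt).
Variable z : pt.
Hypotheses (lam_ge0 : forall j, 0 <= lam j) (lam_sum1 : \sum_j lam j = 1)
  (p_feas : forall j, pp_feasible G1 (p j) /\ zero_one_on W (p j \o @cnode T))
  (z_p : forall k, coord G1 k -> z k = \sum_j lam j * p j k).
Hypotheses (mu_ge0 : forall l, 0 <= mu l)
  (q_feas : forall l, pp_feasible G2 (q l) /\ zero_one_on W (q l \o @cnode T))
  (z_q : forall k, coord G2 k -> z k = \sum_l mu l * q l k).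
Hypothesis z_supp : supported G z.
Hypothesis same_law : forall B,
  \sum_(j | pattern W (p j \o @cnode T) == B) lam j
  = \sum_(l | pattern W (q l \o @cnode T) == B) mu l.

Lemma PP_coupled_glue : PP G z.
Proof.
pose f j := pattern W (p j \o @cnode T); pose g l := pattern W (q l \o @cnode T).
pose nu := coupling lam mu f g.
(* Pairs with different patterns have weight 0 and get the placeholder 0. *)
apply/convE; exists (I1 * I2)%type, nu,
  (fun x => if f x.1 == g x.2 then glue G1 (p x.1) (q x.2) else (fun _ => 0)).
split.
- exact: coupling_ge0.
- by rewrite (sum_coupling lam_ge0 same_law).
- move=> x; case: eqP => [fg | _]; last exact: pp_feasible0.
  apply: glue_feasible; [exact: (p_feas _).1 | exact: (q_feas _).1 |].
  exact: eq_pattern_zero_one (p_feas _).2 (q_feas _).2 fg.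
- move=> k; rewrite (eq_bigr (fun x => nu x * glue G1 (p x.1) (q x.2) k)); last first.
    move=> x _; case: ifP => // /negbT fg.
    by rewrite /nu /coupling (negbTE fg) !mul0r.
  rewrite /glue; case: (boolP (coord G1 k)) => kG1.
    by rewrite (sum_coupling_fst lam_ge0 same_law (fun j => p j k)) z_p.
  rewrite (sum_coupling_snd mu_ge0 same_law (fun l => q l k)).
  case: (boolP (coord G2 k)) => kG2; first exact: z_q.
  rewrite z_supp ?big1 // => [l _ | ].
    by case: (q_feas l) => -[q_supp _ _ _ _] _; rewrite q_supp ?mulr0.
  by rewrite -G_union coord_union (negbTE kG1) (negbTE kG2).
Qed.

End CoupledGluing.

Lemma PP_glue z :
  [disjoint V1 :&: V2 & hlplus G] ->
  (forall S, S \subset V1 :&: V2 -> (1 < #|S|)%N -> S \in hedges G) ->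
  supported G z -> PP G1 (restr G1 z) -> PP G2 (restr G2 z) -> PP G z.
Proof.
set W := V1 :&: V2 => W_noplus W_complete z_supp.
have round_section (V : {set T}) :
    W \subset V -> PP (section G V) (restr (section G V) z) ->
    exists I : finType, conv_fin I
      (fun q => pp_feasible (section G V) q /\ zero_one_on W (q \o @cnode T))
      (restr (section G V) z).
  move=> WV /convE[I zV]; exists (I * {set T})%type; apply: conv_fin_round zV => //.
  exact: disjointWr (subsetIl _ _) W_noplus.
have complete_section (V : {set T}) : W \subset V ->
    forall S, S \subset W -> (1 < #|S|)%N -> S \in hedges (section G V).
  by move=> WV S SW S_big; rewrite inE W_complete // (subset_trans SW).
have W1 : W \subset hnodes G1 := subsetIl V1 V2.
have W2 : W \subset hnodes G2 := subsetIr V1 V2.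
move=> /(round_section _ W1) [I1 [lam [p [lam_ge0 lam_sum1 p_feas z_p]]]].
move=> /(round_section _ W2) [I2 [mu [q [mu_ge0 mu_sum1 q_feas z_q]]]].
have {}z_p k : coord G1 k -> z k = \sum_j lam j * p j k.
  by move=> kG1; rewrite -z_p /restr kG1.
have {}z_q k : coord G2 k -> z k = \sum_l mu l * q l k.
  by move=> kG2; rewrite -z_q /restr kG2.
apply: (PP_coupled_glue lam_ge0 lam_sum1 p_feas z_p mu_ge0 q_feas z_q z_supp) => B.
rewrite (pattern_law W1 (complete_section _ W1)
                     (fun j => (p_feas j).1) lam_sum1 z_p B (fun j => (p_feas j).2)).
exact/esym/(pattern_law W2 (complete_section _ W2)
                     (fun l => (q_feas l).1) mu_sum1 z_q B (fun l => (q_feas l).2)).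
Qed.

End Gluing.

End Hypergraphs.

Theorem corollary1 (R : realType) (T : finType) (G : hgraph T)
    (V1 V2 : {set T}) :
  hg_wf G ->
  V1 \subset hnodes G -> V2 \subset hnodes G ->
  hg_union (section G V1) (section G V2) = G ->
  complete (hg_inter (section G V1) (section G V2)) ->
  hlplus (hg_inter (section G V1) (section G V2)) = set0 ->
  forall z : idx T -> R,
    PP G z <->
    [/\ supported G z, PP (section G V1) (restr (section G V1) z)
      & PP (section G V2) (restr (section G V2) z)].
Proof.
move=> G_wf V1G V2G G_union G12_complete G12_noplus z; split.
  move=> zG; split; first by apply: conv_supported zG => q [].
    by apply: conv_restr zG => q; apply: section_feasible.
  by apply: conv_restr zG => q; apply: section_feasible.
case=> z_supp z1 z2; apply: PP_glue z_supp z1 z2 => //.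
  exact: inter_noplus.
exact: inter_complete_edges.
Qed.
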